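(* Assume $c_i=c>0$, $\gamma_i=\gamma>0$, $\nu_i=\nu>0$, $\rho_i=\rho\in(-1,1)$ for all $i$, and let $z^\star_{s,n},z^\star_{d,n},z^\star_{o,n}$ (the last for $n\ge2$) be the common values of the maximiser of $f$ as defined in the context, viewed as functions of $\gamma_{\rm P}\in(0,\infty)$. Then: (i) $\mathrm{sgn}(z^\star_{s,n})=-\mathrm{sgn}(\rho)$; (ii) for $n\ge2$, $z^\star_{o,n}>0$ for every $\gamma_{\rm P}>0$; and $z^\star_{d,n}>0$ for all $n\ge1$; (iii) $|z^\star_{s,n}|$ is non-increasing in $\gamma_{\rm P}$ (strictly decreasing if $\rho\ne0$) and $z^\star_{s,n}\to0$ as $\gamma_{\rm P}\to\infty$; (iv) for $n\ge2$, $\lim_{\gamma_{\rm P}\to\infty}z^\star_{o,n}=\frac{\gamma}{(n-1)A+\gamma}\in(0,1)$; (v) for all $n\ge1$, $\lim_{\gamma_{\rm P}\to\infty}z^\star_{d,n}=\frac{(n-1)A-(n-2)\gamma}{(n-1)A+\gamma}\in(0,1]$, where $A=\gamma+\frac{1}{c\nu^2}$.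
   Context: Fix an integer $n\ge1$ and parameters $\sigma>0$, $\gamma_{\rm P}>0$, and for each $i\in\{1,\dots,n\}$: $c_i>0$, $\gamma_i>0$, $\nu_i>0$, $\rho_i\in(-1,1)$. Write $\nu=(\nu_1,\dots,\nu_n)^\top$, $\rho=(\rho_1,\dots,\rho_n)^\top$. The variables are a matrix $z^Q=(z^{Q,i,j})_{i,j}\in\mathbb{R}^{n\times n}$ ($i$ row, $j$ column) and a vector $z^S=(z^{S,1},\dots,z^{S,n})^\top\in\mathbb{R}^n$. Define $f:\mathbb{R}^{n\times n}\times\mathbb{R}^n\to\mathbb{R}$ by $$f(z^Q,z^S)=-\frac1n\sum_{i=1}^n\Big(\frac{(z^{Q,i,i})^2}{2c_i}+\frac{\gamma_i}{2}\sum_{j=1}^n\nu_j^2(z^{Q,i,j})^2+\frac{\gamma_i\sigma^2}{2}(z^{S,i})^2+\frac{\gamma_i\sigma}{\sqrt n}z^{S,i}\sum_{j=1}^n\rho_j\nu_jz^{Q,i,j}-\frac{z^{Q,i,i}}{c_i}\Big)-\frac{\gamma_{\rm P}}{2n^2}\sum_{i=1}^n\Big(\Big(\nu_i-\nu_i\sum_{j=1}^nz^{Q,j,i}-\frac{\rho_i\sigma}{\sqrt n}\sum_{j=1}^nz^{S,j}\Big)^2+\frac{(1-\rho_i^2)\sigma^2}{n}\Big(\sum_{j=1}^nz^{S,j}\Big)^2\Big).$$ $f$ has a unique global maximiser $(z^{Q,\star},z^{S,\star})$. In the homogeneous case this maximiser is symmetric: $z^{S,i,\star}=z^\star_{s,n}$,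 $z^{Q,i,i,\star}=z^\star_{d,n}$ for all $i$, and $z^{Q,i,j,\star}=z^\star_{o,n}$ for all $i\ne j$ (when $n\ge2$). *)

From HB Require Import structures.
From mathcomp Require Import all_boot all_order all_algebra.
From mathcomp Require Import all_classical all_reals all_analysis.
Set Implicit Arguments. Unset Strict Implicit. Unset Printing Implicit Defensive.
Import Order.TTheory GRing.Theory Num.Theory.
Local Open Scope ring_scope.

(* The objective f of the context, with general (heterogeneous) parameters
   c, gam, nu, rho : 'I_n -> R, sigma, gamP : R.
   zQ : 'M[R]_n  (zQ i j = z^{Q,i,j}, i row, j column),
   zS : 'cV[R]_n (zS i 0 = z^{S,i}). *)
Definition fobj (R : realType) (n : nat) (sigma gamP : R)
  (c gam nu rho : 'I_n -> R) (zQ : 'M[R]_n) (zS : 'cV[R]_n) : R :=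
  let N := n%:R in
  let sumS := \sum_(j < n) zS j 0 in
  - (1 / N) * \sum_(i < n)
      ( (zQ i i) ^+ 2 / (2 * c i)
      + gam i / 2 * \sum_(j < n) (nu j) ^+ 2 * (zQ i j) ^+ 2
      + gam i * sigma ^+ 2 / 2 * (zS i 0) ^+ 2
      + gam i * sigma / Num.sqrt N * zS i 0 * \sum_(j < n) rho j * nu j * zQ i j
      - zQ i i / c i )
  - gamP / (2 * N ^+ 2) * \sum_(i < n)
      ( (nu i - nu i * (\sum_(j < n) zQ j i) - rho i * sigma / Num.sqrt N * sumS) ^+ 2
      + (1 - (rho i) ^+ 2) * sigma ^+ 2 / N * sumS ^+ 2 ).

Definition is_global_maximiser (R : realType) (n : nat) (sigma gamP : R)
  (c gam nu rho : 'I_n -> R) (zQ : 'M[R]_n) (zS : 'cV[R]_n) : Prop :=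
  forall (zQ' : 'M[R]_n) (zS' : 'cV[R]_n),
    fobj sigma gamP c gam nu rho zQ' zS' <= fobj sigma gamP c gam nu rho zQ zS.

From HB Require Import structures.
From mathcomp Require Import all_boot all_order all_algebra.
From mathcomp Require Import all_classical all_reals all_analysis.
From mathcomp Require Import ring lra.
Import Order.TTheory GRing.Theory Num.Theory.
Import numFieldNormedType.Exports.
Local Open Scope classical_set_scope.
Local Open Scope ring_scope.
Set Implicit Arguments. Unset Strict Implicit. Unset Printing Implicit Defensive.

(** In the homogeneous case f is a strictly concave quadratic, so its maximiser
    is its unique critical point.  One guesses a symmetric critical point
    (z_d, z_o, z_s), explicit rational functions of gamP, and checks the
    first-order conditions; the linear terms of f(z + D) - f(z) then vanish and
    what is left is minus a quadratic form in the perturbation D.  Completing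
    squares and Cauchy-Schwarz show that this form dominates
    gam (1 - rho^2) sigma^2 |D^S|^2 / 2 and vanishes only at D = 0, so every
    maximiser equals the guess.  Properties (i)-(v) are then read off the
    formulas: z_s = - rho K h(gamP) with K > 0 and h positive and strictly
    decreasing to 0, while z_o and z_d are ratios of affine functions of gamP. *)

Lemma invr_cvgy0 (R : realType) : (x : R)^-1 @[x --> +oo] --> 0.
Proof.
have -> : (fun x : R => x^-1) = unstable.inv_fun id by [].
by apply/gtr0_cvgV0; [exact: nbhs_pinfty_gt | exact: cvg_id].
Qed.

Lemma cvgy_affine_ratio (R : realType) (p q r s : R) : 0 < r ->
  (p * x + q) / (r * x + s) @[x --> +oo] --> p / r.
Proof.
move=> r_gt0.
have lim_inv (u v : R) : u + v * x^-1 @[x --> +oo] --> u.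
  rewrite -[X in _ --> X]addr0 -(mulr0 v).
  by apply: cvgD; [exact: cvg_cst | apply: cvgMl_tmp; exact: invr_cvgy0].
have : (p + q * x^-1) / (r + s * x^-1) @[x --> +oo] --> p / r.
  by apply: cvgM; [|apply: cvgV; rewrite ?gt_eqF].
apply: cvg_trans; apply: near_eq_cvg; near=> x.
have x_gt0 : 0 < x by near: x; exact: nbhs_pinfty_gt.
have sr_lt_x : - s / r < x by near: x; apply: nbhs_pinfty_gt; exact: num_real.
have den_gt0 : 0 < r * x + s by move: sr_lt_x; rewrite ltr_pdivrMr // mulrC; lra.
by rewrite /=; field; rewrite !gt_eqF.
Unshelve. all: by end_near.
Qed.

Lemma cvgy_eq_pos (R : realType) (u v : R -> R) (l : R) :
  (forall x, 0 < x -> u x = v x) -> v x @[x --> +oo] --> l -> u x @[x --> +oo] --> l.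
Proof.
move=> uv; apply: cvg_trans; apply: near_eq_cvg; near=> x.
have x_gt0 : 0 < x by near: x; exact: nbhs_pinfty_gt.
by rewrite /= uv.
Unshelve. all: by end_near.
Qed.

Lemma cvgy_inv_affine (R : realType) (q r s : R) : 0 < r ->
  q / (r * x + s) @[x --> +oo] --> 0.
Proof.
move=> r_gt0; rewrite -[X in _ --> X](mul0r r^-1).
suff -> : (fun x : R => q / (r * x + s)) = (fun x => (0 * x + q) / (r * x + s)).
  exact: cvgy_affine_ratio.
by apply: funext => x; rewrite mul0r add0r.
Qed.

Lemma one_sub_sqr_gt0 (R : realFieldType) (x : R) : -1 < x -> x < 1 -> 0 < 1 - x ^+ 2.
Proof.
move=> x_gtN1 x_lt1; rewrite (_ : _ - _ = (1 - x) * (1 + x)); last by ring.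
by rewrite mulr_gt0 //; lra.
Qed.

Lemma sqr_sum_le (R : realFieldType) n (y : 'I_n -> R) :
  (\sum_j y j) ^+ 2 <= n%:R * \sum_j y j ^+ 2.
Proof.
case: n y => [|n] y; first by rewrite !big_ord0 expr0n mul0r.
set N := n.+1%:R; set W := \sum_j y j ^+ 2; set S := \sum_j y j.
have N_gt0 : 0 < N by rewrite ltr0n.
have sqE : \sum_j (N * y j - S) ^+ 2 = N * (N * W - S ^+ 2).
  transitivity (\sum_j (N ^+ 2 * y j ^+ 2 - 2 * N * S * y j + S ^+ 2)).
    by apply: eq_bigr => j _; ring.
  rewrite !big_split /= sumrN sumr_const card_ord -mulr_natl -!mulr_sumr -/W -/S -/N; ring.
rewrite -subr_ge0 -(pmulr_rge0 _ N_gt0) -sqE.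
by apply: sumr_ge0 => j _; exact: sqr_ge0.
Qed.

Section ClosedForm.
Variables (R : realType) (N m sigma c1 gam nu rho : R).

(* N, m and c1 stand for n, sqrt n and 1 / (c nu^2); Acoef is the paper's A.
   For gamP = g the candidate maximiser is z^{Q,i,i} = zd g, z^{Q,i,j} = zo g
   (i <> j) and z^{S,i} = zs g. *)

Definition Acoef := gam + c1.
Definition limden := (N - 1) * Acoef + gam.
Definition zden (g : R) :=
  g * (1 - rho ^+ 2) * limden + gam * ((1 - rho ^+ 2) * N * Acoef + rho ^+ 2 * c1).
Definition zo (g : R) := gam * (g * (1 - rho ^+ 2) + rho ^+ 2 * c1) / zden g.
Definition zd (g : R) := 1 - gam * (1 - zo g) / Acoef.
Definition zs_scale (g : R) := (N - 1 + gam / (g + gam)) / zden g.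
Definition zs_coef := nu * gam * c1 / (sigma * m).
Definition zs (g : R) := - rho * zs_coef * zs_scale g.

(* Column sum of z^Q and residual inside the gamP-penalty at the candidate. *)
Definition zcol (g : R) := N * zo g + (zd g - zo g).
Definition zresid (g : R) := nu - nu * zcol g - rho * sigma / m * (N * zs g).

Hypotheses (N_sqr : N = m ^+ 2) (m_gt0 : 0 < m) (N_ge1 : 1 <= N)
  (sigma_gt0 : 0 < sigma) (c1_gt0 : 0 < c1) (gam_gt0 : 0 < gam) (nu_gt0 : 0 < nu)
  (rho_gtN1 : -1 < rho) (rho_lt1 : rho < 1).

Let rho_sqr_lt1 : 0 < 1 - rho ^+ 2.
Proof. exact: one_sub_sqr_gt0. Qed.

Lemma Acoef_gt0 : 0 < Acoef.
Proof. exact: addr_gt0. Qed.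

Lemma limden_gt0 : 0 < limden.
Proof.
have := Acoef_gt0; rewrite /limden => A_gt0.
have : 0 <= (N - 1) * Acoef by rewrite mulr_ge0 ?subr_ge0 // ltW.
by move: gam_gt0; lra.
Qed.

Lemma zden_gt0 g : 0 <= g -> 0 < zden g.
Proof.
move=> g_ge0; have := rho_sqr_lt1; have := limden_gt0; have := Acoef_gt0.
rewrite /zden => A_gt0 L_gt0 r_gt0.
have h1 : 0 <= g * (1 - rho ^+ 2) * limden by rewrite !mulr_ge0 // ltW.
have h2 : 0 < gam * ((1 - rho ^+ 2) * N * Acoef + rho ^+ 2 * c1).
  rewrite mulr_gt0 // ltr_pwDl ?(mulr_ge0 (sqr_ge0 rho) (ltW c1_gt0)) //.
  by rewrite !mulr_gt0 //; move: N_ge1; lra.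
lra.
Qed.

Lemma zo_gt0 g : 0 < g -> 0 < zo g.
Proof.
move=> g_gt0; rewrite /zo divr_gt0 ?zden_gt0 ?ltW // mulr_gt0 //.
have := mulr_ge0 (sqr_ge0 rho) (ltW c1_gt0); have := mulr_gt0 g_gt0 rho_sqr_lt1.
lra.
Qed.

Lemma zdE g : zd g = (c1 + gam * zo g) / Acoef.
Proof.
have := Acoef_gt0; rewrite /zd /Acoef => A_gt0.
by field; rewrite gt_eqF.
Qed.

Lemma zd_gt0 g : 0 < g -> 0 < zd g.
Proof.
move=> g_gt0; rewrite zdE divr_gt0 ?Acoef_gt0 //.
by rewrite ltr_pwDl // mulr_ge0 // ltW // zo_gt0.
Qed.

Lemma zs_scale_gt0 g : 0 <= g -> 0 < zs_scale g.
Proof.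
move=> g_ge0; rewrite /zs_scale divr_gt0 ?zden_gt0 //.
by rewrite ltr_pwDr ?subr_ge0 // divr_gt0 //; move: gam_gt0; lra.
Qed.

Lemma zs_scale_decr g1 g2 : 0 <= g1 -> g1 < g2 -> zs_scale g2 < zs_scale g1.
Proof.
move=> g1_ge0 g12; have g2_ge0 : 0 <= g2 by lra.
have zden_lt : zden g1 < zden g2.
  rewrite -subr_gt0 (_ : _ - _ = (g2 - g1) * (1 - rho ^+ 2) * limden).
    by rewrite mulr_gt0 ?limden_gt0 // mulr_gt0 ?rho_sqr_lt1 // subr_gt0.
  by rewrite /zden; ring.
have frac_lt : gam / (g2 + gam) < gam / (g1 + gam).
  by rewrite ltr_pM2l // ltf_pV2 ?posrE; move: gam_gt0; lra.
rewrite /zs_scale (@lt_trans _ _ ((N - 1 + gam / (g1 + gam)) / zden g2)) //.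
  by rewrite ltr_pM2r ?invr_gt0 ?zden_gt0 //; lra.
rewrite ltr_pM2l ?ltf_pV2 ?posrE ?zden_gt0 //.
by rewrite ltr_pwDr ?subr_ge0 // divr_gt0 //; move: gam_gt0; lra.
Qed.

Lemma zs_coef_gt0 : 0 < zs_coef.
Proof. by rewrite /zs_coef divr_gt0 ?mulr_gt0. Qed.

Lemma sgr_zs g : 0 <= g -> Num.sg (zs g) = - Num.sg rho.
Proof.
move=> g_ge0; have := mulr_gt0 zs_coef_gt0 (zs_scale_gt0 g_ge0) => pos.
by rewrite /zs -mulrA sgrM sgrN (gtr0_sg pos) mulr1.
Qed.

Lemma normr_zs g : 0 <= g -> `|zs g| = `|rho| * zs_coef * zs_scale g.
Proof.
move=> g_ge0; have := mulr_gt0 zs_coef_gt0 (zs_scale_gt0 g_ge0) => pos.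
by rewrite /zs -mulrA normrM normrN (gtr0_norm pos) mulrA.
Qed.

Lemma normr_zs_lt g1 g2 : rho != 0 -> 0 <= g1 -> g1 < g2 -> `|zs g2| < `|zs g1|.
Proof.
move=> rho_neq0 g1_ge0 g12; rewrite !normr_zs //; last by rewrite (le_trans g1_ge0) ?ltW.
by rewrite ltr_pM2l ?zs_scale_decr // mulr_gt0 ?normr_gt0 ?zs_coef_gt0.
Qed.

Lemma normr_zs_le g1 g2 : 0 <= g1 -> g1 <= g2 -> `|zs g2| <= `|zs g1|.
Proof.
move=> g1_ge0; rewrite le_eqVlt => /predU1P[-> // | g12].
have [rho0 | rho_neq0] := eqVneq rho 0; first by rewrite /zs rho0 oppr0 !mul0r.
exact/ltW/normr_zs_lt.
Qed.

Lemma foc_diag g : (zd g - 1) * c1 + gam * (zd g - zo g) = 0.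
Proof.
have := Acoef_gt0; rewrite /zd /Acoef => A_gt0.
by field; rewrite gt_eqF.
Qed.

Lemma foc_off g : 0 <= g ->
  gam * nu ^+ 2 * zo g + gam * sigma / m * zs g * rho * nu = g * zresid g * nu / N.
Proof.
move=> g_ge0; have := zden_gt0 g_ge0; have := Acoef_gt0.
have : 0 < g + gam by move: gam_gt0; lra.
rewrite /zresid /zcol /zd /zs /zs_coef /zs_scale /zo /zden /limden /Acoef N_sqr => g_gam A_gt0 P_gt0.
by field; rewrite !gt_eqF.
Qed.

Lemma foc_shock g : 0 <= g ->
  gam * sigma ^+ 2 * zs g + gam * sigma / m * rho * nu * zcol g
  = g * (zresid g * rho * sigma / m - (1 - rho ^+ 2) * sigma ^+ 2 * zs g).
Proof.
move=> g_ge0; have := zden_gt0 g_ge0; have := Acoef_gt0.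
have : 0 < g + gam by move: gam_gt0; lra.
rewrite /zresid /zcol /zd /zs /zs_coef /zs_scale /zo /zden /limden /Acoef N_sqr => g_gam A_gt0 P_gt0.
by field; rewrite !gt_eqF.
Qed.

Lemma zo_cvgy : zo x @[x --> +oo] --> gam / limden.
Proof.
have r_gt0 := rho_sqr_lt1.
have -> : gam / limden = (gam * (1 - rho ^+ 2)) / ((1 - rho ^+ 2) * limden).
  by field; rewrite !gt_eqF // limden_gt0.
have -> : zo = fun x => (gam * (1 - rho ^+ 2) * x + gam * (rho ^+ 2 * c1))
    / ((1 - rho ^+ 2) * limden * x + gam * ((1 - rho ^+ 2) * N * Acoef + rho ^+ 2 * c1)).
  by apply: funext => x; rewrite /zo /zden; congr (_ / _); ring.
by apply: cvgy_affine_ratio; rewrite mulr_gt0 // limden_gt0.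
Qed.

Lemma zd_cvgy : zd x @[x --> +oo] --> ((N - 1) * Acoef - (N - 2) * gam) / limden.
Proof.
have -> : ((N - 1) * Acoef - (N - 2) * gam) / limden
    = 1 - gam * (1 - gam / limden) / Acoef.
  have := limden_gt0; have := Acoef_gt0; rewrite /limden => A_gt0 L_gt0.
  by field; rewrite !gt_eqF.
apply: cvgD; first exact: cvg_cst.
apply: cvgN; apply: cvgMr_tmp; apply: cvgMl_tmp.
by apply: cvgD; [exact: cvg_cst | apply: cvgN; exact: zo_cvgy].
Qed.

Lemma zs_cvgy : zs x @[x --> +oo] --> 0.
Proof.
set K := - rho * zs_coef.
set s := gam * ((1 - rho ^+ 2) * N * Acoef + rho ^+ 2 * c1).
have -> : zs = fun x => K * ((N - 1 + gam / (1 * x + gam))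
                           * (1 / ((1 - rho ^+ 2) * limden * x + s))).
  apply: funext => x; rewrite /zs /zs_scale /zden !mul1r -/K -/s.
  by congr (K * (_ * _^-1)); ring.
rewrite -[X in _ --> X](mulr0 K); apply: cvgMl_tmp.
rewrite -[X in _ --> X](mulr0 (N - 1)); apply: cvgM.
  rewrite -[X in _ --> X](addr0 (N - 1)).
  by apply: cvgD; [exact: cvg_cst | exact: cvgy_inv_affine].
by apply: cvgy_inv_affine; rewrite mulr_gt0 ?rho_sqr_lt1 ?limden_gt0.
Qed.

Lemma zo_lim_in01 : 1 < N -> 0 < gam / limden < 1.
Proof.
move=> N_gt1; have L_gt0 := limden_gt0.
rewrite divr_gt0 //= ltr_pdivrMr // mul1r /limden.
have : 0 < (N - 1) * Acoef by rewrite mulr_gt0 ?Acoef_gt0 // subr_gt0.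
lra.
Qed.

Lemma zd_lim_in01 : 0 < ((N - 1) * Acoef - (N - 2) * gam) / limden <= 1.
Proof.
have L_gt0 := limden_gt0; rewrite /limden in L_gt0 *.
have Ngam : 0 <= (N - 1) * gam by rewrite mulr_ge0 ?subr_ge0 // ltW.
have Nc1 : 0 <= (N - 1) * c1 by rewrite mulr_ge0 ?subr_ge0 // ltW.
rewrite divr_gt0 /= ?ler_pdivrMr // ?mul1r /Acoef.
  by move: gam_gt0; lra.
by rewrite -[X in 0 < X](_ : (N - 1) * c1 + gam = _) /Acoef; [move: gam_gt0; lra | ring].
Qed.

End ClosedForm.

Section Objective.
Variables (R : realType) (n : nat) (sigma c gam nu rho : R).
Hypotheses (n_gt0 : (0 < n)%N) (c_gt0 : 0 < c) (gam_gt0 : 0 < gam)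
  (sigma_gt0 : 0 < sigma) (nu_gt0 : 0 < nu) (rho_gtN1 : -1 < rho) (rho_lt1 : rho < 1).

Local Notation N := (n%:R : R).
Local Notation m := (Num.sqrt (n%:R : R)).
Local Notation f g := (fobj sigma g (fun _ => c) (fun _ => gam) (fun _ => nu) (fun _ => rho)).

Let m_gt0 : 0 < m.
Proof. by rewrite sqrtr_gt0 ltr0n. Qed.

Let N_gt0 : 0 < N.
Proof. by rewrite ltr0n. Qed.

Definition symmx (d o : R) : 'M[R]_n := \matrix_(i, j) if i == j then d else o.

Lemma symmx_diag d o i : symmx d o i i = d.
Proof. by rewrite mxE eqxx. Qed.

Lemma sumr_cst (x : R) : \sum_(j < n) x = N * x.
Proof. by rewrite sumr_const card_ord mulr_natl. Qed.

Lemma sum_symmx_row d o i (y : 'I_n -> R) :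
  \sum_j symmx d o i j * y j = o * \sum_j y j + (d - o) * y i.
Proof.
rewrite (bigD1 i) //= [in RHS](bigD1 i) //= symmx_diag mulrDr.
under eq_bigr => j ji do rewrite mxE eq_sym (negbTE ji).
by rewrite -mulr_sumr; ring.
Qed.

Lemma sum_symmx_col d o i (y : 'I_n -> R) :
  \sum_j symmx d o j i * y j = o * \sum_j y j + (d - o) * y i.
Proof.
by rewrite -sum_symmx_row; apply: eq_bigr => j _; rewrite !mxE eq_sym.
Qed.

Lemma sum_symmx_row1 d o i : \sum_j symmx d o i j = N * o + (d - o).
Proof.
transitivity (\sum_j symmx d o i j * 1); first by apply: eq_bigr => j _; rewrite mulr1.
by rewrite sum_symmx_row sumr_cst !mulr1 mulrC.
Qed.

Lemma sum_symmx_col1 d o i : \sum_j symmx d o j i = N * o + (d - o).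
Proof.
transitivity (\sum_j symmx d o j i * 1); first by apply: eq_bigr => j _; rewrite mulr1.
by rewrite sum_symmx_col sumr_cst !mulr1 mulrC.
Qed.

Definition row_quad (M : 'M[R]_n) (S : 'cV[R]_n) (i : 'I_n) :=
  M i i ^+ 2 / (2 * c) + gam / 2 * \sum_j nu ^+ 2 * M i j ^+ 2
  + gam * sigma ^+ 2 / 2 * S i 0 ^+ 2
  + gam * sigma / m * S i 0 * \sum_j rho * nu * M i j.

Definition own_cost (M : 'M[R]_n) (S : 'cV[R]_n) :=
  \sum_i (row_quad M S i - M i i / c).

Definition penalty (M : 'M[R]_n) (S : 'cV[R]_n) :=
  \sum_i ((nu - nu * \sum_j M j i - rho * sigma / m * \sum_j S j 0) ^+ 2
          + (1 - rho ^+ 2) * sigma ^+ 2 / N * (\sum_j S j 0) ^+ 2).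

Definition penalty_quad (D : 'M[R]_n) (e : 'cV[R]_n) :=
  \sum_i ((nu * \sum_j D j i + rho * sigma / m * \sum_j e j 0) ^+ 2
          + (1 - rho ^+ 2) * sigma ^+ 2 / N * (\sum_j e j 0) ^+ 2).

Lemma fobjE g M S : f g M S = - (1 / N) * own_cost M S - g / (2 * N ^+ 2) * penalty M S.
Proof. by []. Qed.

Lemma row_quad_shift d o a D e i :
  row_quad (symmx d o + D) (const_mx a + e) i
  = row_quad (symmx d o) (const_mx a) i + row_quad D e i
  + (d / c + gam * nu ^+ 2 * (d - o)) * D i i + gam * nu ^+ 2 * o * \sum_j D i j
  + gam * sigma ^+ 2 * a * e i 0
  + gam * sigma / m * rho * nu * (a * \sum_j D i j + (N * o + (d - o)) * e i 0).
Proof.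
have sqE : \sum_j nu ^+ 2 * (symmx d o + D) i j ^+ 2
    = \sum_j nu ^+ 2 * symmx d o i j ^+ 2 + 2 * nu ^+ 2 * \sum_j symmx d o i j * D i j
      + \sum_j nu ^+ 2 * D i j ^+ 2.
  by rewrite mulr_sumr -!big_split /=; apply: eq_bigr => j _; rewrite mxE; ring.
have linE : \sum_j rho * nu * (symmx d o + D) i j
    = rho * nu * \sum_j symmx d o i j + rho * nu * \sum_j D i j.
  rewrite -!mulr_sumr -mulrDr -big_split /=.
  by congr (_ * _); apply: eq_bigr => j _; rewrite mxE.
rewrite /row_quad sqE linE sum_symmx_row -!mulr_sumr sum_symmx_row1 !mxE eqxx.
by field; rewrite !gt_eqF.
Qed.

Lemma own_cost_shift d o a D e :
  own_cost (symmx d o + D) (const_mx a + e)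
  = own_cost (symmx d o) (const_mx a) + \sum_i row_quad D e i
  + ((d - 1) / c + gam * nu ^+ 2 * (d - o)) * \tr D
  + (gam * nu ^+ 2 * o + gam * sigma / m * a * rho * nu) * \sum_i \sum_j D i j
  + (gam * sigma ^+ 2 * a + gam * sigma / m * rho * nu * (N * o + (d - o)))
    * \sum_i e i 0.
Proof.
rewrite /own_cost /mxtrace !mulr_sumr -!big_split /=; apply: eq_bigr => i _.
rewrite row_quad_shift !mxE eqxx.
by field; rewrite !gt_eqF.
Qed.

Lemma penalty_shift d o a D e :
  let E := nu - nu * (N * o + (d - o)) - rho * sigma / m * (N * a) in
  penalty (symmx d o + D) (const_mx a + e)
  = penalty (symmx d o) (const_mx a) + penalty_quad D e
  - 2 * E * nu * \sum_i \sum_j D i j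
  - 2 * N * (E * rho * sigma / m - (1 - rho ^+ 2) * sigma ^+ 2 * a) * \sum_i e i 0.
Proof.
move=> E.
have shockE : \sum_j (const_mx a + e) j 0 = N * a + \sum_j e j 0.
  by rewrite -sumr_cst -big_split /=; apply: eq_bigr => j _; rewrite !mxE.
have shock0E : \sum_j (const_mx a : 'cV[R]_n) j 0 = N * a.
  by rewrite -sumr_cst; apply: eq_bigr => j _; rewrite mxE.
have colE i : \sum_j (symmx d o + D) j i = N * o + (d - o) + \sum_j D j i.
  by rewrite -(sum_symmx_col1 d o i) -big_split /=; apply: eq_bigr => j _; rewrite mxE.
rewrite /penalty /penalty_quad shockE shock0E exchange_big /=.
under eq_bigr do rewrite colE.
under [in RHS]eq_bigr do rewrite sum_symmx_col1.
set sp := \sum_j e j 0.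
set X := E * rho * sigma / m - (1 - rho ^+ 2) * sigma ^+ 2 * a.
have -> : 2 * N * X * sp = \sum_(i < n) (2 * X * sp) by rewrite sumr_cst; ring.
rewrite [2 * E * nu * _]mulr_sumr -big_split -!sumrB /=.
apply: eq_bigr => i _; rewrite /X /E.
by field; rewrite !gt_eqF.
Qed.

(* The three hypotheses are the first-order conditions of f at
   (symmx d o, const_mx a): they kill the terms of f linear in (D, e). *)
Lemma fobj_shift g d o a D e :
  let T := N * o + (d - o) in
  let E := nu - nu * T - rho * sigma / m * (N * a) in
  (d - 1) / c + gam * nu ^+ 2 * (d - o) = 0 ->
  gam * nu ^+ 2 * o + gam * sigma / m * a * rho * nu = g * E * nu / N ->
  gam * sigma ^+ 2 * a + gam * sigma / m * rho * nu * T
    = g * (E * rho * sigma / m - (1 - rho ^+ 2) * sigma ^+ 2 * a) ->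
  f g (symmx d o + D) (const_mx a + e)
  = f g (symmx d o) (const_mx a)
    - ((\sum_i row_quad D e i) / N + g / (2 * N ^+ 2) * penalty_quad D e).
Proof.
move=> T E foc_d foc_o foc_s.
rewrite !fobjE own_cost_shift penalty_shift -/T -/E foc_d foc_o foc_s.
by field; rewrite !gt_eqF.
Qed.

Local Notation c1 := (1 / (c * nu ^+ 2)).
Local Notation zd_opt := (zd N c1 gam rho).
Local Notation zo_opt := (zo N c1 gam rho).
Local Notation zs_opt := (zs N m sigma c1 gam nu rho).

Let N_sqr : N = m ^+ 2.
Proof. by rewrite sqr_sqrtr // ltW. Qed.

Let N_ge1 : 1 <= N.
Proof. by rewrite ler1n. Qed.

Let c1_gt0 : 0 < c1.
Proof. by rewrite divr_gt0 // mulr_gt0 // exprn_gt0. Qed.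

Lemma fobj_shift_opt g D e : 0 <= g ->
  f g (symmx (zd_opt g) (zo_opt g) + D) (const_mx (zs_opt g) + e)
  = f g (symmx (zd_opt g) (zo_opt g)) (const_mx (zs_opt g))
    - ((\sum_i row_quad D e i) / N + g / (2 * N ^+ 2) * penalty_quad D e).
Proof.
move=> g_ge0; apply: fobj_shift.
- rewrite (_ : _ + _ = nu ^+ 2 * ((zd_opt g - 1) * c1 + gam * (zd_opt g - zo_opt g))).
    by rewrite foc_diag ?mulr0.
  by field; rewrite !gt_eqF.
- exact: foc_off.
- exact: foc_shock.
Qed.

Lemma row_quad_sos (D : 'M[R]_n) (e : 'cV[R]_n) i :
  row_quad D e i
  = gam / 2 * (1 - rho ^+ 2) * sigma ^+ 2 * e i 0 ^+ 2 + D i i ^+ 2 / (2 * c)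
    + gam / 2 * (nu * (\sum_j D i j) / m + rho * sigma * e i 0) ^+ 2
    + gam * nu ^+ 2 / (2 * N) * (N * \sum_j D i j ^+ 2 - (\sum_j D i j) ^+ 2).
Proof.
have sqE : \sum_j nu ^+ 2 * D i j ^+ 2 = nu ^+ 2 * \sum_j D i j ^+ 2 by rewrite mulr_sumr.
have linE : \sum_j rho * nu * D i j = rho * nu * \sum_j D i j by rewrite mulr_sumr.
rewrite /row_quad sqE linE; move: (\sum_j D i j) (\sum_j D i j ^+ 2) => S W.
move: N_sqr m_gt0; move: (Num.sqrt N) => s Ns s_gt0; rewrite Ns.
by field; rewrite !gt_eqF.
Qed.

Let rho_sqr_lt1 : 0 < 1 - rho ^+ 2.
Proof. exact: one_sub_sqr_gt0. Qed.

Let row_coef_gt0 : 0 < gam / 2 * (1 - rho ^+ 2) * sigma ^+ 2.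
Proof.
by apply: mulr_gt0; [apply: mulr_gt0; [exact: divr_gt0 | exact: rho_sqr_lt1] | exact: exprn_gt0].
Qed.

Lemma row_quad_ge (D : 'M[R]_n) (e : 'cV[R]_n) i :
  gam / 2 * (1 - rho ^+ 2) * sigma ^+ 2 * e i 0 ^+ 2 <= row_quad D e i.
Proof.
rewrite row_quad_sos -!addrA lerDl.
have cs : 0 <= N * \sum_j D i j ^+ 2 - (\sum_j D i j) ^+ 2 by rewrite subr_ge0 sqr_sum_le.
rewrite !addr_ge0 //.
- exact: divr_ge0 (sqr_ge0 _) (mulr_ge0 (ler0n _ 2) (ltW c_gt0)).
- exact: mulr_ge0 (divr_ge0 (ltW gam_gt0) (ler0n _ 2)) (sqr_ge0 _).
- apply: mulr_ge0 cs; apply: divr_ge0; first exact: mulr_ge0 (ltW gam_gt0) (sqr_ge0 _).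
  exact: mulr_ge0 (ler0n _ 2) (ltW N_gt0).
Qed.

Lemma row_quad_eq0 (D : 'M[R]_n) (e : 'cV[R]_n) i :
  row_quad D e i = 0 -> e i 0 = 0 /\ forall j, D i j = 0.
Proof.
move=> q0.
have e0 : e i 0 = 0.
  have := row_quad_ge D e i; rewrite q0 pmulr_rle0 // => e2_le0.
  by apply/eqP; rewrite -sqrf_eq0 eq_le e2_le0 sqr_ge0.
have sum0 : D i i ^+ 2 / (2 * c) + gam / 2 * \sum_j nu ^+ 2 * D i j ^+ 2 = 0.
  by rewrite -[RHS]q0 /row_quad e0; ring.
have Dii_ge0 : 0 <= D i i ^+ 2 / (2 * c).
  exact: divr_ge0 (sqr_ge0 _) (mulr_ge0 (ler0n _ 2) (ltW c_gt0)).
have W_ge0 : 0 <= \sum_j nu ^+ 2 * D i j ^+ 2.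
  by apply: sumr_ge0 => j _; rewrite mulr_ge0 ?sqr_ge0.
have W0 : \sum_j nu ^+ 2 * D i j ^+ 2 = 0.
  apply/eqP; rewrite eq_le W_ge0 andbT -(pmulr_rle0 _ (_ : 0 < gam / 2)) ?divr_gt0 //.
  lra.
split=> // j.
have := psumr_eq0P (fun k _ => mulr_ge0 (sqr_ge0 nu) (sqr_ge0 (D i k))) W0 (i := j) isT.
by move/eqP; rewrite mulf_eq0 !sqrf_eq0 (gt_eqF nu_gt0) => /eqP.
Qed.

Lemma penalty_quad_ge0 D e : 0 <= penalty_quad D e.
Proof.
apply: sumr_ge0 => i _; rewrite addr_ge0 ?sqr_ge0 // mulr_ge0 ?sqr_ge0 //.
by rewrite divr_ge0 ?mulr_ge0 ?sqr_ge0 // ltW.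
Qed.

Lemma maximiser_eq_opt g Q S : 0 < g ->
  is_global_maximiser sigma g (fun _ => c) (fun _ => gam) (fun _ => nu) (fun _ => rho) Q S ->
  Q = symmx (zd_opt g) (zo_opt g) /\ S = const_mx (zs_opt g).
Proof.
move=> g_gt0 QS_max.
set Q0 := symmx _ _; set S0 := const_mx _.
have QE : Q = Q0 + (Q - Q0) by rewrite addrC subrK.
have SE : S = S0 + (S - S0) by rewrite addrC subrK.
have le := QS_max Q0 S0; rewrite QE SE (fobj_shift_opt _ _ (ltW g_gt0)) in le.
set D := Q - Q0 in QE le *; set e := S - S0 in SE le *.
have row_ge0 i : 0 <= row_quad D e i.
  exact: le_trans (mulr_ge0 (ltW row_coef_gt0) (sqr_ge0 _)) (row_quad_ge D e i).
have X_ge0 : 0 <= (\sum_i row_quad D e i) / N.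
  by apply: divr_ge0 (ltW N_gt0); apply: sumr_ge0 => i _.
have Y_ge0 : 0 <= g / (2 * N ^+ 2) * penalty_quad D e.
  by rewrite mulr_ge0 ?penalty_quad_ge0 // divr_ge0 ?mulr_ge0 ?sqr_ge0 // ltW.
have : (\sum_i row_quad D e i) / N = 0 by lra.
move/eqP; rewrite mulf_eq0 invr_eq0 (gt_eqF N_gt0) orbF.
move=> /eqP /(psumr_eq0P (fun i _ => row_ge0 i)) row0.
have De0 i := row_quad_eq0 (row0 i isT).
have D0 : D = 0 by apply/matrixP => i j; rewrite [RHS]mxE; exact: (De0 i).2.
have e0 : e = 0 by apply/matrixP => i j; rewrite (ord1 j) [RHS]mxE; exact: (De0 i).1.
by rewrite QE SE D0 e0 !addr0.
Qed.

End Objective.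
Theorem mainTheorem3 (R : realType) (n : nat) (hn : (0 < n)%N)
  (sigma c gam nu rho : R)
  (hsigma : 0 < sigma) (hc : 0 < c) (hgam : 0 < gam) (hnu : 0 < nu)
  (hrho1 : -1 < rho) (hrho2 : rho < 1)
  (Z : R -> 'M[R]_n * 'cV[R]_n)
  (hZ : forall gamP : R, 0 < gamP ->
     is_global_maximiser sigma gamP (fun _ => c) (fun _ => gam)
       (fun _ => nu) (fun _ => rho) (Z gamP).1 (Z gamP).2) :
  let A := gam + 1 / (c * nu ^+ 2) in
  let N := (n%:R : R) in
  (* (i) *)
  (forall gamP : R, 0 < gamP -> forall i : 'I_n,
     Num.sg ((Z gamP).2 i 0) = - Num.sg rho) /\
  (* (ii) *)
  (forall gamP : R, 0 < gamP -> forall i j : 'I_n, i != j ->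
     0 < (Z gamP).1 i j) /\
  (forall gamP : R, 0 < gamP -> forall i : 'I_n, 0 < (Z gamP).1 i i) /\
  (* (iii) *)
  (forall i : 'I_n, forall g1 g2 : R, 0 < g1 -> g1 <= g2 ->
     `|(Z g2).2 i 0| <= `|(Z g1).2 i 0|) /\
  (rho != 0 -> forall i : 'I_n, forall g1 g2 : R, 0 < g1 -> g1 < g2 ->
     `|(Z g2).2 i 0| < `|(Z g1).2 i 0|) /\
  (forall i : 'I_n, (Z gP).2 i 0 @[gP --> +oo] --> (0 : R)) /\
  (* (iv) *)
  (forall i j : 'I_n, i != j ->
     (Z gP).1 i j @[gP --> +oo] --> gam / ((N - 1) * A + gam)) /\
  ((1 < n)%N -> 0 < gam / ((N - 1) * A + gam) < 1) /\
  (* (v) *)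
  (forall i : 'I_n,
     (Z gP).1 i i @[gP --> +oo] -->
       ((N - 1) * A - (N - 2) * gam) / ((N - 1) * A + gam)) /\
  (0 < ((N - 1) * A - (N - 2) * gam) / ((N - 1) * A + gam) <= 1).
Proof.
move=> A N; set c1 := 1 / (c * nu ^+ 2); set m := Num.sqrt N.
have N_sqr : N = m ^+ 2 by rewrite sqr_sqrtr // ler0n.
have m_gt0 : 0 < m by rewrite sqrtr_gt0 ltr0n.
have N_ge1 : 1 <= N by rewrite ler1n.
have c1_gt0 : 0 < c1 by rewrite divr_gt0 // mulr_gt0 // exprn_gt0.
have opt g (g_gt0 : 0 < g) :=
  maximiser_eq_opt hn hc hgam hsigma hnu hrho1 hrho2 g_gt0 (hZ g g_gt0).
have ZQ g i j : 0 < g -> (Z g).1 i j = if i == j then zd N c1 gam rho g else zo N c1 gam rho g.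
  by move=> g_gt0; rewrite (opt g g_gt0).1 mxE.
have ZS g i : 0 < g -> (Z g).2 i 0 = zs N m sigma c1 gam nu rho g.
  by move=> g_gt0; rewrite (opt g g_gt0).2 mxE.
split; first by move=> g g_gt0 i; rewrite ZS //; apply: sgr_zs => //; exact: ltW.
split; first by move=> g g_gt0 i j ij; rewrite ZQ // (negbTE ij); exact: zo_gt0.
split; first by move=> g g_gt0 i; rewrite ZQ // eqxx; exact: zd_gt0.
split.
  move=> i g1 g2 g1_gt0 g12; have g2_gt0 := lt_le_trans g1_gt0 g12.
  by rewrite !ZS //; apply: normr_zs_le => //; exact: ltW.
split.
  move=> rho_neq0 i g1 g2 g1_gt0 g12; have g2_gt0 := lt_trans g1_gt0 g12.
  by rewrite !ZS //; apply: normr_zs_lt => //; exact: ltW.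
split.
  move=> i; apply: (cvgy_eq_pos (v := zs N m sigma c1 gam nu rho)); last exact: zs_cvgy.
  by move=> g g_gt0; rewrite ZS.
split.
  move=> i j ij; apply: (cvgy_eq_pos (v := zo N c1 gam rho)); last exact: zo_cvgy.
  by move=> g g_gt0; rewrite ZQ // (negbTE ij).
split; first by move=> n_gt1; apply: zo_lim_in01 => //; rewrite ltr1n.
split.
  move=> i; apply: (cvgy_eq_pos (v := zd N c1 gam rho)); last exact: zd_cvgy.
  by move=> g g_gt0; rewrite ZQ // eqxx.
exact: zd_lim_in01.
Qed.
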